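(* Consider the constrained decoding algorithm below, run with a language model $\mathsf{lm}$ and an AST predicate $\varphi$, using a function $\mathsf{realizable}$ that is under-approximate or consistent (definitions in the context). Then constrained decoding is sound: whenever the algorithm returns a string $\omega$ (rather than $\bot$), we have $\varphi(\mathsf{parse}(\omega))$.
   Context: Let $\Sigma$ be a finite alphabet, $\mathsf{AST}$ a set of abstract syntax trees, and $\mathsf{parse}\colon \Sigma^*\to\mathsf{AST}\cup\{\bot\}$ a parsing function. A semantic constraint is a predicate $\varphi\colon\mathsf{AST}\to\mathrm{bool}$ (taken false on $\bot$). A token vocabulary $\mathcal{T}$ is a set of finite strings over $\Sigma$ such that every string in $\Sigma^*$ is a concatenation of tokens; it contains a distinguished one-character token $\mathsf{END}$. Token sequences are identified with the strings they concatenate to. It is assumed that every string satisfying the constraint contains $\mathsf{END}$ exactly once, as its last character: if $\varphi(\mathsf{parse}(\omega))$ then $\omega$ ends with $\mathsf{END}$ and $\mathsf{END}$ does not occur earlier in $\omega$. A language model is a function $\mathsf{lm}\colon\mathcal{T}^*\to\mathcal{T}\to[0,1]$. Constrained decoding algorithm: initialize a worklist (an abstract queue data structure with operations enqueue/dequeue, whose order may depend on the supplied probabilities) to contain only the empty string $\epsilon$. While the worklist is nonempty: dequeue a string $\omega$; for each $\tau\in\mathcal{T}$, if $\mathsf{realizable}(\omega\tau,\varphi)$ holds then, if $\tau=\mathsf{END}$, return $\omega\tau$; otherwise enqueue $\omega\tau$ with priority $\mathsf{lm}(\omega,\tau)$. If the worklist becomes empty, return $\bot$. A realizability checker $\mathsf{realizable}(\omega,\varphi)$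 is under-approximate if $\mathsf{realizable}(\omega,\varphi)\Rightarrow\exists\omega'\in\Sigma^*.\ \varphi(\mathsf{parse}(\omega\omega'))$ for all $\omega$; it is consistent if for every $\omega$ whose last character is $\mathsf{END}$, $\mathsf{realizable}(\omega,\varphi)\Leftrightarrow\varphi(\mathsf{parse}(\omega))$. *)

From mathcomp Require Import all_boot all_order all_algebra.
Set Implicit Arguments. Unset Strict Implicit. Unset Printing Implicit Defensive.
Import Order.TTheory GRing.Theory Num.Theory.

(* Strings over Sigma are [seq Sigma]; tokens are strings; token sequences
   are identified with the strings they concatenate to.
   [parse : seq Sigma -> option AST], with [None] playing the role of bot. *)

Definition sat (Sigma AST : Type) (parse : seq Sigma -> option AST)
  (phi : AST -> bool) (w : seq Sigma) : bool :=
  if parse w is Some a then phi a else false.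

(* No laws are imposed: the order of dequeuing is arbitrary. *)
Record worklist (Sigma : Type) (R : Type) := Worklist {
  wl_state :> Type;
  wl_empty : wl_state;
  wl_enqueue : wl_state -> seq Sigma -> R -> wl_state;
  wl_dequeue : wl_state -> option (seq Sigma * wl_state)
}.

Section Decode.
Variables (Sigma : eqType) (AST : Type) (R : Type).
Variable (Wl : worklist Sigma R).
Variable (vocab : seq (seq Sigma)) (END : Sigma).
Variable (lm : seq Sigma -> seq Sigma -> R).
Variable (realizable : seq Sigma -> (AST -> bool) -> bool).
Variable (phi : AST -> bool).

(* The inner "for each tau in T" loop applied to the dequeued string w:
   returns [inr (w tau)] if it returns, otherwise [inl] of the new worklist. *)
Fixpoint expand (w : seq Sigma) (ts : seq (seq Sigma)) (q : Wl)
  : Wl + seq Sigma :=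
  match ts with
  | [::] => inl q
  | tau :: ts' =>
      if realizable (w ++ tau) phi then
        if tau == [:: END] then inr (w ++ tau)
        else expand w ts' (wl_enqueue q (w ++ tau) (lm w tau))
      else expand w ts' q
  end.

(* Run the while loop for at most [fuel] iterations.
   Result: [None] = not yet terminated; [Some None] = returned bot;
   [Some (Some w)] = returned the string w. *)
Fixpoint run (fuel : nat) (q : Wl) : option (option (seq Sigma)) :=
  match fuel with
  | 0 => None
  | fuel'.+1 =>
      match wl_dequeue q with
      | None => Some None
      | Some (w, q') =>
          match expand w vocab q' with
          | inr res => Some (Some res)
          | inl q'' => run fuel' q''
          end
      end
  end.

Definition decode (fuel : nat) : option (option (seq Sigma)) :=
  run fuel (wl_enqueue (wl_empty Wl) [::] (lm [::] [::])).
End Decode.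

Definition under_approximate (Sigma AST : Type) (parse : seq Sigma -> option AST)
  (realizable : seq Sigma -> (AST -> bool) -> bool) (phi : AST -> bool) : Prop :=
  forall w, realizable w phi -> exists w', sat parse phi (w ++ w').

Definition consistent (Sigma AST : Type) (parse : seq Sigma -> option AST)
  (realizable : seq Sigma -> (AST -> bool) -> bool) (phi : AST -> bool)
  (END : Sigma) : Prop :=
  forall w0, realizable (rcons w0 END) phi = sat parse phi (rcons w0 END).

(* The algorithm can only return a string [rcons w END] for which
   [realizable (rcons w END) phi] was checked. A consistent checker then
   gives [phi (parse (rcons w END))] directly. An under-approximate one gives
   some extension [rcons w END ++ w'] satisfying [phi]; as satisfying strings
   contain END only as their last character, [w'] is empty. *)
From mathcomp Require Import all_boot all_order all_algebra.
Set Implicit Arguments. Unset Strict Implicit. Unset Printing Implicit Defensive.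
Import Order.TTheory GRing.Theory Num.Theory.
Local Open Scope ring_scope.

Lemma rcons_cat_rcons_nil (T : eqType) (x : T) (w w' v : seq T) :
  rcons w x ++ w' = rcons v x -> x \notin v -> w' = [::].
Proof.
case/lastP: w' => [|w' y] // /esym; rewrite -rcons_cat => /rcons_inj [-> _].
by rewrite mem_cat mem_rcons mem_head.
Qed.

Section DecodeResult.
Variables (Sigma : eqType) (AST R : Type) (Wl : worklist Sigma R).
Variables (vocab : seq (seq Sigma)) (END : Sigma).
Variable lm : seq Sigma -> seq Sigma -> R.
Variables (realizable : seq Sigma -> (AST -> bool) -> bool) (phi : AST -> bool).

Lemma expand_inr w ts (q : Wl) res :
  expand END lm realizable phi w ts q = inr res ->
  res = rcons w END /\ realizable (rcons w END) phi.
Proof.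
elim: ts q => [|tau ts IH] q //=.
case: ifP => [realizable_w_tau|_]; last exact: IH.
case: eqP => [tau_END [<-]|_]; last exact: IH.
by rewrite tau_END cats1 in realizable_w_tau *.
Qed.

Lemma run_Some_Some fuel (q : Wl) res :
  run vocab END lm realizable phi fuel q = Some (Some res) ->
  exists w, res = rcons w END /\ realizable (rcons w END) phi.
Proof.
elim: fuel q => [|fuel IH] q //=.
case: (wl_dequeue q) => [[w q']|] //.
case E: (expand _ _ _ _ _ _ _) => [q''|r]; first exact: IH.
by move=> [<-]; exists w; apply: expand_inr E.
Qed.

End DecodeResult.

Lemma under_approximate_sat_rcons (Sigma : eqType) (AST : Type)
    (parse : seq Sigma -> option AST) (realizable : seq Sigma -> (AST -> bool) -> bool)
    (phi : AST -> bool) (END : Sigma) (w : seq Sigma) :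
  (forall v, sat parse phi v -> exists v0, v = rcons v0 END /\ END \notin v0) ->
  under_approximate parse realizable phi ->
  realizable (rcons w END) phi -> sat parse phi (rcons w END).
Proof.
move=> sat_END_last underapprox /underapprox [w' sat_ext].
have [v0 [ext_eq END_notin_v0]] := sat_END_last _ sat_ext.
by rewrite -[rcons w END]cats0 -(rcons_cat_rcons_nil ext_eq END_notin_v0).
Qed.

Theorem mainTheorem1
  (Sigma : finType) (AST : Type) (parse : seq Sigma -> option AST)
  (R : realFieldType)
  (vocab : seq (seq Sigma)) (END : Sigma)
  (Hvocab_uniq : uniq vocab)
  (Hcover : forall w : seq Sigma,
      exists ts : seq (seq Sigma), all (fun t => t \in vocab) ts /\ flatten ts = w)
  (HEND : [:: END] \in vocab)
  (phi : AST -> bool)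
  (Hphi_END : forall w, sat parse phi w ->
      exists w0, w = rcons w0 END /\ END \notin w0)
  (lm : seq Sigma -> seq Sigma -> R)
  (Hlm : forall w tau, 0 <= lm w tau <= 1)
  (realizable : seq Sigma -> (AST -> bool) -> bool)
  (Hreal : under_approximate parse realizable phi \/
           consistent parse realizable phi END)
  (Wl : worklist Sigma R)
  (fuel : nat) (w : seq Sigma) :
  decode Wl vocab END lm realizable phi fuel = Some (Some w) ->
  sat parse phi w.
Proof.
move=> /run_Some_Some [w0 [-> realizable_w]].
case: Hreal => [underapprox | consistentP]; last by rewrite -consistentP.
exact: under_approximate_sat_rcons Hphi_END underapprox realizable_w.
Qed.
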